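(* Let $W\in[0,1]^{k\times k}$ be a symmetric positive semidefinite matrix with all diagonal entries equal to $1$, let ${\boldsymbol\mu}\in\mathbb{R}^k$, and consider the collaborative learning problem with strategy space $\mathbb{R}_+^k$ and linear utilities ${\bf u}({\boldsymbol\theta})=W{\boldsymbol\theta}$ and thresholds $\mu_i$. Then the program $$\min\ \sum_{i=1}^k\theta_i\quad\text{s.t.}\quad W{\boldsymbol\theta}\ge{\boldsymbol\mu},\ \ {\boldsymbol\theta}\ge\mathbf{0},\ \ {\boldsymbol\theta}^\top W{\boldsymbol\theta}-{\boldsymbol\mu}^\top{\boldsymbol\theta}\le0$$ is a convex program, and its optimal solutions are optimal stable equilibria (stable equilibria minimizing $\mathbf{1}^\top{\boldsymbol\theta}$).
   Context: ${\boldsymbol\theta}$ is feasible if $u_i({\boldsymbol\theta})\ge\mu_i$ for all $i$. A feasible ${\boldsymbol\theta}\in\mathbb{R}_+^k$ is a stable equilibrium if for no $i$ is there $0\le\theta_i'<\theta_i$ with $u_i(\theta_i',{\boldsymbol\theta}_{-i})\ge\mu_i$, where $(x,{\boldsymbol\theta}_{-i})$ denotes ${\boldsymbol\theta}$ with $i$-th entry replaced by $x$. *)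

From HB Require Import structures.
From mathcomp Require Import all_boot all_order all_algebra.
From mathcomp Require Import reals.
Set Implicit Arguments. Unset Strict Implicit. Unset Printing Implicit Defensive.
Import Order.TTheory GRing.Theory Num.Theory.
Local Open Scope ring_scope.

Section CL.
Variables (R : realType) (k : nat).

Definition utility (W : 'M[R]_k) (theta : 'cV[R]_k) (i : 'I_k) : R :=
  (W *m theta) i 0.

Definition replace_entry (theta : 'cV[R]_k) (i : 'I_k) (x : R) : 'cV[R]_k :=
  \col_j (if j == i then x else theta j 0).

Definition nonneg_vec (theta : 'cV[R]_k) : Prop := forall i, 0 <= theta i 0.

Definition feasible (W : 'M[R]_k) (mu theta : 'cV[R]_k) : Prop :=
  nonneg_vec theta /\ forall i, mu i 0 <= utility W theta i.

Definition stable_equilibrium (W : 'M[R]_k) (mu theta : 'cV[R]_k) : Prop :=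
  feasible W mu theta /\
  forall i (x : R), 0 <= x -> x < theta i 0 ->
    ~ (mu i 0 <= utility W (replace_entry theta i x) i).

Definition total (theta : 'cV[R]_k) : R := \sum_i theta i 0.

Definition quad_constraint (W : 'M[R]_k) (mu theta : 'cV[R]_k) : R :=
  (theta^T *m W *m theta) 0 0 - (mu^T *m theta) 0 0.

Definition program_feasible (W : 'M[R]_k) (mu theta : 'cV[R]_k) : Prop :=
  (forall i, mu i 0 <= (W *m theta) i 0) /\ nonneg_vec theta /\
  quad_constraint W mu theta <= 0.

Definition program_optimal (W : 'M[R]_k) (mu theta : 'cV[R]_k) : Prop :=
  program_feasible W mu theta /\
  forall theta', program_feasible W mu theta' -> total theta <= total theta'.

Definition optimal_stable_equilibrium (W : 'M[R]_k) (mu theta : 'cV[R]_k) : Prop :=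
  stable_equilibrium W mu theta /\
  forall theta', stable_equilibrium W mu theta' -> total theta <= total theta'.

Definition convex_fun (f : 'cV[R]_k -> R) : Prop :=
  forall (x y : 'cV[R]_k) (t : R), 0 <= t -> t <= 1 ->
    f (t *: x + (1 - t) *: y) <= t * f x + (1 - t) * f y.

End CL.

From HB Require Import structures.
From mathcomp Require Import all_boot all_order all_algebra.
From mathcomp Require Import reals.
From mathcomp Require Import ring lra.
Import Order.TTheory GRing.Theory Num.Theory.
Local Open Scope ring_scope.

(* Since [W i i = 1], lowering theta_i to x lowers u_i by exactly theta_i - x,
   and theta^T W theta - mu^T theta = sum_i theta_i (u_i(theta) - mu_i).  On
   the feasible set every summand is nonnegative, so the quadratic constraint
   says that each theta_i = 0 or u_i(theta) = mu_i, which is exactly the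
   absence of a profitable decrease: the feasible set of the program is the set
   of stable equilibria.  Convexity comes from the identity
   q(t x + (1-t) y) = t q(x) + (1-t) q(y) - t (1-t) q(x - y)
   for the quadratic form q of the positive semidefinite W. *)

(* [a] plays theta_i and [s] the slack u_i(theta) - mu_i. *)
Lemma no_feasible_decrease_iff (R : realFieldType) (a s : R) :
  0 <= a -> 0 <= s ->
  (forall x, 0 <= x -> x < a -> ~ (0 <= s - a + x)) <-> a * s = 0.
Proof.
move=> a_ge0 s_ge0; split=> [no_dec | /eqP].
- apply/eqP; rewrite mulf_eq0; apply/negPn/negP; rewrite negb_or.
  case/andP=> a_neq0 s_neq0.
  have a_gt0 : 0 < a by rewrite lt_def a_neq0.
  have s_gt0 : 0 < s by rewrite lt_def s_neq0.
  have [s_le_a|a_lt_s] := leP s a.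
  + by apply: (no_dec (a - s)); lra.
  + by apply: (no_dec 0); lra.
- rewrite mulf_eq0 => /orP[/eqP-> x x_ge0 | /eqP-> x _ x_lt_a]; lra.
Qed.

Lemma mulmx_comb_entry (R : comPzRingType) (m k : nat) (A : 'M[R]_(m, k))
    (a b : R) (x y : 'cV[R]_k) (i : 'I_m) :
  (A *m (a *: x + b *: y)) i 0 = a * (A *m x) i 0 + b * (A *m y) i 0.
Proof. by rewrite mulmxDr -!scalemxAr !mxE. Qed.

Lemma convex_fun_sublevel (R : realType) (k : nat) (f : 'cV[R]_k -> R)
    (x y : 'cV[R]_k) (t : R) :
  convex_fun f -> 0 <= t -> t <= 1 -> f x <= 0 -> f y <= 0 ->
  f (t *: x + (1 - t) *: y) <= 0.
Proof.
move=> f_cvx t_ge0 t_le1 fx_le0 fy_le0.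
apply: le_trans (f_cvx x y t t_ge0 t_le1) _; nra.
Qed.

Section LinearUtilities.
Variables (R : realType) (k : nat) (W : 'M[R]_k).

Definition bform (x y : 'cV[R]_k) : R := (x^T *m W *m y) 0 0.

Lemma bform_combl (a b : R) (x y z : 'cV[R]_k) :
  bform (a *: x + b *: y) z = a * bform x z + b * bform y z.
Proof. by rewrite /bform linearD !linearZ /= !mulmxDl -!scalemxAl !mxE. Qed.

Lemma bform_combr (a b : R) (x y z : 'cV[R]_k) :
  bform z (a *: x + b *: y) = a * bform z x + b * bform z y.
Proof. exact: mulmx_comb_entry. Qed.

Lemma bform_convex_comb (t : R) (x y : 'cV[R]_k) :
  bform (t *: x + (1 - t) *: y) (t *: x + (1 - t) *: y) =
  t * bform x x + (1 - t) * bform y y - t * (1 - t) * bform (x - y) (x - y).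
Proof.
have -> : x - y = 1 *: x + (-1) *: y by rewrite scale1r scaleN1r.
rewrite !bform_combl !bform_combr; ring.
Qed.

Hypothesis W_psd : forall x : 'cV[R]_k, 0 <= bform x x.

Lemma convex_quad_constraint (mu : 'cV[R]_k) : convex_fun (quad_constraint W mu).
Proof.
move=> x y t t_ge0 t_le1; rewrite /quad_constraint -!/(bform _ _).
rewrite bform_convex_comb mulmx_comb_entry.
have t'_ge0 : 0 <= 1 - t by rewrite subr_ge0.
have := mulr_ge0 (mulr_ge0 t_ge0 t'_ge0) (W_psd (x - y)); lra.
Qed.

Lemma convex_program_feasible (mu x y : 'cV[R]_k) (t : R) :
  0 <= t -> t <= 1 -> program_feasible W mu x -> program_feasible W mu y ->
  program_feasible W mu (t *: x + (1 - t) *: y).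
Proof.
move=> t_ge0 t_le1 [ux [x_ge0 qx]] [uy [y_ge0 qy]]; split; [|split].
- move=> i; rewrite mulmx_comb_entry.
  have := ux i; have := uy i; nra.
- move=> i; rewrite !mxE.
  have := x_ge0 i; have := y_ge0 i; nra.
- exact: convex_fun_sublevel (convex_quad_constraint mu) _ _ _ _.
Qed.

Lemma quad_constraint_sum (mu theta : 'cV[R]_k) :
  quad_constraint W mu theta =
  \sum_i theta i 0 * (utility W theta i - mu i 0).
Proof.
rewrite /quad_constraint /utility -mulmxA !mxE -sumrB; apply: eq_bigr => i _.
by rewrite !mxE mulrBr [mu i 0 * _]mulrC.
Qed.

Definition complementary_slack (mu theta : 'cV[R]_k) : Prop :=
  forall i, theta i 0 * (utility W theta i - mu i 0) = 0.

Lemma quad_constraint_le0_iff (mu theta : 'cV[R]_k) :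
  feasible W mu theta ->
  quad_constraint W mu theta <= 0 <-> complementary_slack mu theta.
Proof.
move=> [theta_ge0 u_ge_mu].
have term_ge0 i : 0 <= theta i 0 * (utility W theta i - mu i 0).
  by rewrite mulr_ge0 // subr_ge0.
rewrite quad_constraint_sum; split=> [sum_le0 | slack].
- have /psumr_eq0P zero : \sum_i theta i 0 * (utility W theta i - mu i 0) = 0.
    by apply: le_anti; rewrite sum_le0 sumr_ge0.
  by move=> i; apply: zero => // j _.
- by rewrite big1.
Qed.

Hypothesis W_diag : forall i, W i i = 1.

Lemma utility_replace_entry (theta : 'cV[R]_k) (i : 'I_k) (x : R) :
  utility W (replace_entry theta i x) i = utility W theta i - theta i 0 + x.
Proof.
rewrite /utility !mxE (bigD1 i) //= (bigD1 i (P := xpredT)) //= !mxE eqxx W_diag.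
have -> : \sum_(j < k | j != i) W i j * replace_entry theta i x j 0 =
          \sum_(j < k | j != i) W i j * theta j 0.
  by apply: eq_bigr => j /negbTE j_neq_i; rewrite !mxE j_neq_i.
rewrite !mul1r; lra.
Qed.

Lemma stable_equilibriumE (mu theta : 'cV[R]_k) :
  stable_equilibrium W mu theta <->
  feasible W mu theta /\ complementary_slack mu theta.
Proof.
have decrease_iff i : feasible W mu theta ->
    (forall x, 0 <= x -> x < theta i 0 ->
       ~ (mu i 0 <= utility W (replace_entry theta i x) i)) <->
    theta i 0 * (utility W theta i - mu i 0) = 0.
  move=> [theta_ge0 u_ge_mu].
  rewrite -no_feasible_decrease_iff ?subr_ge0 //.
  by split=> no_dec x x_ge0 x_lt;
    move: (no_dec x x_ge0 x_lt); rewrite utility_replace_entry; lra.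
split=> [[feas no_dec] | [feas slack]]; split=> // i.
- by apply/(decrease_iff i feas); exact: no_dec.
- by apply/(decrease_iff i feas); exact: slack.
Qed.

Lemma stable_equilibrium_program_feasible (mu theta : 'cV[R]_k) :
  stable_equilibrium W mu theta <-> program_feasible W mu theta.
Proof.
rewrite stable_equilibriumE; split=> [[feas slack] | [u_ge_mu [theta_ge0 q_le0]]].
- by case: (feas) => theta_ge0 u_ge_mu; do 2!split=> //; apply/quad_constraint_le0_iff.
- have feas : feasible W mu theta by [].
  by split=> //; apply/quad_constraint_le0_iff.
Qed.

End LinearUtilities.

Theorem theorem5 (R : realType) (k : nat) (W : 'M[R]_k) (mu : 'cV[R]_k)
  (hW01 : forall i j, 0 <= W i j /\ W i j <= 1)
  (hWsym : W^T = W)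
  (hWpsd : forall x : 'cV[R]_k, 0 <= (x^T *m W *m x) 0 0)
  (hWdiag : forall i, W i i = 1) :
  (* convex program: linear objective, linear constraints, convex quadratic
     constraint function (hence also a convex feasible set) *)
  (convex_fun (quad_constraint W mu) /\
   (forall (x y : 'cV[R]_k) (t : R), 0 <= t -> t <= 1 ->
      program_feasible W mu x -> program_feasible W mu y ->
      program_feasible W mu (t *: x + (1 - t) *: y))) /\
  (* optimal solutions are optimal stable equilibria *)
  (forall theta, program_optimal W mu theta ->
     optimal_stable_equilibrium W mu theta).
Proof.
split; first split.
- exact: convex_quad_constraint.
- by move=> x y t; apply: convex_program_feasible.
have stable_iff := @stable_equilibrium_program_feasible R k W hWdiag mu.
move=> theta [feas opt]; split.
- exact/stable_iff.
- by move=> theta' /stable_iff /opt.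
Qed.
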